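(* Let $N\ge1$, $\varphi,\gamma\in(0,1)$ with $\varphi+\gamma\ge1$, $\alpha=\min\{\varphi,\gamma\}$, and $\psi=\varphi/\gamma$ if $\varphi\le\gamma$, $\psi=\bar\varphi/\bar\gamma$ if $\varphi>\gamma$. Let $(X_t)_{t\ge0}$ be generated from $X_0$ and a sequence $(Z_t)_{t\ge1}$ of random elements of $\{0,1\}^N$ (independent of the uniforms) by the following rule: $(U(t,k))_{t,k}$ are i.i.d. Uniform$(0,1)$ and, independently for each $k\in[N]$, if $Z_t[k]=1$ then $X_t[k]=1$ iff $X_{t-1}[k]=0$ or ($X_{t-1}[k]=1$ and $U(t,k)\ge\bar\varphi/\gamma$); if $Z_t[k]=0$ and $\varphi\le\gamma$ then $X_t[k]=0$ iff $X_{t-1}[k]=0$ or ($X_{t-1}[k]=1$ and $U(t,k)\ge\psi$); if $Z_t[k]=0$ and $\varphi>\gamma$ then $X_t[k]=1$ iff $X_{t-1}[k]=1$ or ($X_{t-1}[k]=0$ and $U(t,k)\ge\psi$). Then for $t\in\mathbb{Z}_+$, conditional on $X_0$ and $(Z_\tau)_{\tau\le t}$, the coordinates of $X_t$ are independent and $X_t[k]$ is Bernoulli$(p_t[k])$ with $$p_t[k]=\varphi-(\gamma-\varphi)\sum_{l=1}^t\psi^l\prod_{j=t-l+1}^{t}\Big(1-\frac{Z_j[k]}{\alpha}\Big)-\big(\varphi-X_0[k]\big)\psi^t\prod_{j=1}^t\Big(1-\frac{Z_j[k]}{\alpha}\Big).$$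
   Context: $\bar a=1-a$; $[N]=\{1,\dots,N\}$; $\boldsymbol{x}[k]$ is the $k$-th coordinate of $\boldsymbol{x}\in\{0,1\}^N$. *)

From HB Require Import structures.
From mathcomp Require Import all_boot all_order all_algebra.
From mathcomp Require Import all_classical all_reals all_analysis.
Set Implicit Arguments. Unset Strict Implicit. Unset Printing Implicit Defensive.
Import Order.TTheory GRing.Theory Num.Theory.
Import numFieldNormedType.Exports.
Local Open Scope classical_set_scope.
Local Open Scope ring_scope.

Section Defs.
Variable R : realType.

Definition alpha (phi gam : R) : R := Num.min phi gam.

Definition psi (phi gam : R) : R :=
  if phi <= gam then phi / gam else (1 - phi) / (1 - gam).

(* One coordinate update: z = Z_t[k], xprev = X_{t-1}[k], u = U(t,k);
   returns X_t[k] (true = 1). *)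
Definition step (phi gam : R) (z xprev : bool) (u : R) : bool :=
  if z then (~~ xprev) || (xprev && ((1 - phi) / gam <= u))
  else if phi <= gam then
    ~~ ((~~ xprev) || (xprev && (psi phi gam <= u)))
  else
    xprev || ((~~ xprev) && (psi phi gam <= u)).

(* The process X_t (sample path at outcome w), from the initial state x0,
   the sequence z (z t = Z_t, t >= 1; z 0 unused) and the uniforms U. *)
Fixpoint Xproc {T : Type} (N : nat) (phi gam : R) (x0 : 'I_N -> bool)
  (z : nat -> 'I_N -> bool) (U : nat -> 'I_N -> T -> R) (t : nat) (w : T)
  : 'I_N -> bool :=
  match t with
  | 0 => x0
  | t'.+1 => fun k =>
      step phi gam (z t'.+1 k) (Xproc phi gam x0 z U t' w k) (U t'.+1 k w)
  end.

Definition ptk (N : nat) (phi gam : R) (x0 : 'I_N -> bool)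
  (z : nat -> 'I_N -> bool) (t : nat) (k : 'I_N) : R :=
  phi
  - (gam - phi) * \sum_(1 <= l < t.+1)
       (psi phi gam ^+ l *
        \prod_(t - l + 1 <= j < t.+1) (1 - (z j k)%:R / alpha phi gam))
  - (phi - (x0 k)%:R) * psi phi gam ^+ t *
       \prod_(1 <= j < t.+1) (1 - (z j k)%:R / alpha phi gam).

Definition iid_uniform01 {d} {T : measurableType d} (N : nat)
  (P : probability T R) (U : nat -> 'I_N -> T -> R) : Prop :=
  (forall t k, measurable_fun setT (U t k)) /\
  (forall t k (A : set R), measurable A ->
     P (U t k @^-1` A) = (@lebesgue_measure R) (A `&` `[0, 1]%classic)) /\
  (forall (s : seq (nat * 'I_N)) (B : nat * 'I_N -> set R),
     uniq s -> (forall i, measurable (B i)) ->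
     P (\bigcap_(i in [set i | i \in s]) (U i.1 i.2 @^-1` B i)) =
     (\prod_(i <- s) P (U i.1 i.2 @^-1` B i))%E).

End Defs.

From HB Require Import structures.
From mathcomp Require Import all_boot all_order all_algebra.
From mathcomp Require Import all_classical all_reals all_analysis.
From mathcomp Require Import ring lra.
Import Order.TTheory GRing.Theory Num.Theory.
Set Implicit Arguments.
Unset Strict Implicit.
Local Open Scope classical_set_scope.
Local Open Scope ring_scope.

(* Coordinate k of X_t is a function of X_0[k], of Z and of the uniforms
   U(1,k), ..., U(t,k) only, so the events {X_t[k] = b} for distinct k involve
   disjoint families of independent uniforms.  One shows by induction
   on t that {X_t[k] = b} is independent of every cylinder event built from the
   other uniforms, by splitting on X_{t-1}[k] and moving U(t,k) into the
   cylinder.  The same induction shows that X_t[k] follows a two-state Markov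
   chain whose transition probabilities are the lengths of threshold intervals
   of [0,1]; the closed form p_t[k] solves the resulting linear recursion
   p_{t+1} = phi + psi (1 - Z_{t+1}[k] / alpha) (p_t - gamma). *)

Lemma inj_in_map_uniq (T1 T2 : eqType) (f : T1 -> T2) (s : seq T1) :
  uniq (map f s) -> {in s &, injective f}.
Proof.
elim: s => //= a s IH /andP[fas us] x y; rewrite !inE.
case/predU1P=> [->|xs] /predU1P[->|ys] // e.
- by rewrite e map_f in fas.
- by rewrite -e map_f in fas.
- exact: IH.
Qed.

Lemma measurable_threshold_set (R : realType) (g : bool -> bool) (c : R) :
  measurable [set u : R | g (c <= u)].
Proof.
have := measurable_realfun.measurable_fun_ler
  (@measurable_cst _ _ R R setT c) (@measurable_id _ R setT).
by move=> /(_ measurableT [set b | g b] I); rewrite setTI.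
Qed.

Lemma lebesgue_threshold_set (R : realType) (g : bool -> bool) (c : R) :
  0 <= c <= 1 ->
  lebesgue_measure ([set u : R | g (c <= u)] `&` `[0, 1]) =
  ((if g true then 1 - c else 0) + (if g false then c else 0))%:E.
Proof.
case/andP=> c0 c1.
have itv_measure (i : interval R) (m : R) :
    (forall u, 0 <= u <= 1 -> g (c <= u) = (u \in i)) ->
    (forall u, u \in i -> 0 <= u <= 1) -> lebesgue_measure [set` i] = m%:E ->
    lebesgue_measure ([set u | g (c <= u)] `&` `[0, 1]) = m%:E.
  move=> gi i01 <-; congr lebesgue_measure; apply/seteqP; split=> u /=.
    by case=> gu; rewrite in_itv /= => u01; rewrite -gi.
  by move=> ui; have u01 := i01 _ ui; rewrite gi // in_itv.
case gT: (g true); case gF: (g false); rewrite ?add0r ?addr0.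
- apply: (itv_measure `[0, 1]).
  + by move=> u u01; rewrite in_itv u01; case: (c <= u).
  + by move=> u; rewrite in_itv.
  + rewrite lebesgue_measure_itv /= lte_fin ltr01 -EFinB; congr EFin; lra.
- apply: (itv_measure `[c, 1]).
  + by move=> u /andP[u0 u1]; rewrite in_itv /= u1 andbT; case: (c <= u).
  + by move=> u; rewrite in_itv /= => /andP[cu ->]; rewrite (le_trans c0 cu).
  + rewrite lebesgue_measure_itv /= lte_fin -EFinB; case: ltP => h; congr EFin; lra.
- apply: (itv_measure `[0, c[).
  + move=> u /andP[u0 u1]; rewrite in_itv /= u0 /= real_ltNge ?num_real //.
    by case: (c <= u).
  + by move=> u; rewrite in_itv /= => /andP[-> uc]; rewrite (le_trans (ltW uc)).
  + rewrite lebesgue_measure_itv /= lte_fin -EFinB; case: ltP => h; congr EFin; lra.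
- apply: (itv_measure `]0, 0[).
  + by move=> u _; rewrite in_itv /= lt_asym; case: (c <= u).
  + by move=> u; rewrite in_itv /= lt_asym.
  + by rewrite lebesgue_measure_itv /= ltxx.
Qed.

Section TwoStateChain.
Variables (R : realType) (phi gam : R).

Definition threshold (z : bool) : R := if z then (1 - phi) / gam else psi phi gam.

Definition step_above (z xprev above : bool) : bool :=
  if z then ~~ xprev || xprev && above
  else if phi <= gam then ~~ (~~ xprev || xprev && above)
  else xprev || ~~ xprev && above.

Lemma stepE z xprev u :
  step phi gam z xprev u = step_above z xprev (threshold z <= u).
Proof. by case: z. Qed.

(* The probability that [step phi gam z xprev u = x] for [u] uniform on [0,1]. *)
Definition trans (z xprev x : bool) : R :=
  (if step_above z xprev true == x then 1 - threshold z else 0) +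
  (if step_above z xprev false == x then threshold z else 0).

Lemma trans_false z xprev : trans z xprev false = 1 - trans z xprev true.
Proof. by rewrite /trans; case: step_above; case: step_above => /=; ring. Qed.

Variables (N : nat) (x0 : 'I_N -> bool) (z : nat -> 'I_N -> bool).

Fixpoint law (k : 'I_N) (t : nat) (b : bool) : R :=
  if t is t'.+1 then
    law k t' true * trans (z t k) true b + law k t' false * trans (z t k) false b
  else (x0 k == b)%:R.

Lemma law_false k t : law k t false = 1 - law k t true.
Proof.
elim: t => [|t IH] /=; first by case: (x0 k) => /=; ring.
by rewrite !trans_false IH; ring.
Qed.

Lemma ptk_succ t k : ptk phi gam x0 z t.+1 k =
  phi + psi phi gam * (1 - (z t.+1 k)%:R / alpha phi gam) * (ptk phi gam x0 z t k - gam).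
Proof.
have sumS : \sum_(1 <= l < t.+2) psi phi gam ^+ l *
      \prod_(t.+1 - l + 1 <= j < t.+2) (1 - (z j k)%:R / alpha phi gam) =
    psi phi gam * (1 - (z t.+1 k)%:R / alpha phi gam) *
    (1 + \sum_(1 <= l < t.+1) psi phi gam ^+ l *
      \prod_(t - l + 1 <= j < t.+1) (1 - (z j k)%:R / alpha phi gam)).
  rewrite big_ltn // big_add1 /= subn1 /= addn1 big_nat1 [RHS]mulrDr mulr1 expr1.
  congr (_ + _); rewrite big_distrr; apply: eq_big_nat => l /andP[l1 lt] /=.
  rewrite subSS big_nat_recr /=; last by rewrite addn1 ltnS leq_subr.
  by rewrite exprS; ring.
by rewrite /ptk sumS (big_nat_recr t.+1) //= exprS; ring.
Qed.

Hypotheses (hphi : 0 < phi < 1) (hgam : 0 < gam < 1) (hsum : 1 <= phi + gam).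

Lemma threshold_itv z0 : 0 <= threshold z0 <= 1.
Proof.
move: hphi hgam hsum => /andP[p0 p1] /andP[g0 g1] hs.
rewrite /threshold /psi; case: z0; [|case: ifPn; rewrite -?ltNge => h];
  apply/andP; split; (apply: divr_ge0 || rewrite ler_pdivrMr ?mul1r); lra.
Qed.

Lemma law_true k t : law k t true = ptk phi gam x0 z t k.
Proof.
move: hphi hgam => /andP[p0 _] /andP[g0 g1].
have [np ng ng1] : [/\ phi != 0, gam != 0 & 1 - gam != 0].
  by split; rewrite lt0r_neq0 // subr_gt0.
elim: t => [|t IH]; first by rewrite /ptk !big_geq //=; case: (x0 k) => /=; ring.
rewrite /= law_false IH ptk_succ /trans /threshold /alpha /psi /step_above.
by case: (z t.+1 k) => /=; case: leP => _ /=; field; rewrite ?np ?ng ?ng1.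
Qed.

Lemma law_ptk k t b :
  law k t b = if b then ptk phi gam x0 z t k else 1 - ptk phi gam x0 z t k.
Proof. by case: b; rewrite ?law_false law_true. Qed.

End TwoStateChain.

Section Coordinates.
Variables (R : realType) (d : measure_display) (T : measurableType d).
Variables (P : probability T R) (N : nat) (phi gam : R).
Hypotheses (hphi : 0 < phi < 1) (hgam : 0 < gam < 1) (hsum : 1 <= phi + gam).
Variables (U : nat -> 'I_N -> T -> R) (x0 : 'I_N -> bool) (z : nat -> 'I_N -> bool).
Hypothesis U_iid : iid_uniform01 P U.

Let U_measurable := proj1 U_iid.
Let U_law := proj1 (proj2 U_iid).
Let U_indep := proj2 (proj2 U_iid).

Let pr (A : set T) : R := fine (P A).

Lemma prE A : measurable A -> P A = (pr A)%:E.
Proof. by move=> mA; rewrite /pr fineK // fin_num_measure. Qed.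

Lemma measurable_U_preimage t k A : measurable A -> measurable (U t k @^-1` A).
Proof. by move=> mA; rewrite -[_ @^-1` _]setTI; exact: U_measurable. Qed.

Definition cylinder (s : seq ((nat * 'I_N) * set R)) : set T :=
  \big[setI/setT]_(a <- s) U a.1.1 a.1.2 @^-1` a.2.

Lemma measurable_cylinder s : (forall a, a \in s -> measurable a.2) ->
  measurable (cylinder s).
Proof.
move=> ms; rewrite /cylinder big_seq; apply: bigsetI_measurable => a sa.
by apply: measurable_U_preimage; apply: ms.
Qed.

Lemma pr_cylinder s : uniq (unzip1 s) -> (forall a, a \in s -> measurable a.2) ->
  pr (cylinder s) = \prod_(a <- s) pr (U a.1.1 a.1.2 @^-1` a.2).
Proof.
move=> us ms; pose B i := (nth (i, setT) s (index i (unzip1 s))).2.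
have BE a : a \in s -> B a.1 = a.2.
  by move=> sa; rewrite /B nth_index_map //; exact: inj_in_map_uniq us.
have mB i : measurable (B i).
  rewrite /B; case: (ltnP (index i (unzip1 s)) (size s)) => [lt|ge].
    by apply: ms; rewrite mem_nth.
  by rewrite nth_default //; exact: measurableT.
have h := U_indep us mB; rewrite bigcap_seq !big_map in h.
have -> : cylinder s = \big[setI/setT]_(a <- s) U a.1.1 a.1.2 @^-1` B a.1.
  by apply: eq_big_seq => a /BE ->.
apply: EFin_inj; rewrite -prE ?h -?prodEFin; last first.
  by apply: bigsetI_measurable => a _; exact: measurable_U_preimage.
apply: eq_big_seq => a sa; rewrite BE // -prE //.
by apply: measurable_U_preimage; apply: ms.
Qed.

Lemma pr_setU A B : measurable A -> measurable B -> A `&` B = set0 ->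
  pr (A `|` B) = pr A + pr B.
Proof.
by move=> mA mB AB0; rewrite /pr measureU // fineD // fin_num_measure.
Qed.

Definition step_set (zb xprev x : bool) : set R :=
  [set u | step phi gam zb xprev u = x].

Lemma step_setE zb xprev x : step_set zb xprev x =
  [set u | step_above phi gam zb xprev (threshold phi gam zb <= u) == x].
Proof. by apply/seteqP; split=> u; rewrite /step_set /= stepE => /eqP. Qed.

Lemma measurable_step_set zb xprev x : measurable (step_set zb xprev x).
Proof.
rewrite step_setE.
exact: (measurable_threshold_set (fun q => step_above phi gam zb xprev q == x)).
Qed.

Lemma pr_U_step_set t k zb xprev x :
  pr (U t k @^-1` step_set zb xprev x) = trans phi gam zb xprev x.
Proof.
rewrite /pr U_law; last exact: measurable_step_set.
rewrite step_setE.
by rewrite (lebesgue_threshold_set (fun q => step_above phi gam zb xprev q == x))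
  ?threshold_itv.
Qed.

Definition Xevent t k b : set T := [set w | Xproc phi gam x0 z U t w k = b].

Lemma Xevent0 k b : Xevent 0 k b = if x0 k == b then setT else set0.
Proof. by apply/seteqP; split=> w /=; case: eqP. Qed.

Lemma XeventS t k b : Xevent t.+1 k b =
  Xevent t k true `&` U t.+1 k @^-1` step_set (z t.+1 k) true b `|`
  Xevent t k false `&` U t.+1 k @^-1` step_set (z t.+1 k) false b.
Proof.
rewrite /Xevent /step_set; apply/seteqP; split=> w /=;
  case: (Xproc phi gam x0 z U t w k).
- by left.
- by right.
- by case=> [[]|[]].
- by case=> [[]|[]].
Qed.

Lemma measurable_Xevent t k b : measurable (Xevent t k b).
Proof.
elim: t b => [|t IH] b; first by rewrite Xevent0; case: ifP.
by rewrite XeventS; apply: measurableU; apply: measurableI => //;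
  apply: measurable_U_preimage; exact: measurable_step_set.
Qed.

Lemma pr_XeventS_setI t k b Y : measurable Y ->
  pr (Xevent t.+1 k b `&` Y) =
  pr (Xevent t k true `&` (U t.+1 k @^-1` step_set (z t.+1 k) true b `&` Y)) +
  pr (Xevent t k false `&` (U t.+1 k @^-1` step_set (z t.+1 k) false b `&` Y)).
Proof.
move=> mY.
have mI b' : measurable
    (Xevent t k b' `&` (U t.+1 k @^-1` step_set (z t.+1 k) b' b `&` Y)).
  apply: measurableI; first exact: measurable_Xevent.
  by apply: measurableI => //; apply: measurable_U_preimage; exact: measurable_step_set.
rewrite XeventS setIUl -!setIA pr_setU //.
by apply/seteqP; split=> w //; rewrite /Xevent /= => -[[-> _] [+ _]].
Qed.

(* The induction step moves U(t,k) into the cylinder, which is why [g] must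
   contain every index of coordinate [k]; the hypothesis on [E] is used at t = 0. *)
Lemma pr_Xevent_setI_cylinder k (g : pred (nat * 'I_N)) (E : set T) (c : R) :
  (forall j, g (j, k)) -> measurable E ->
  (forall s, uniq (unzip1 s) -> (forall a, a \in s -> measurable a.2) ->
     all (fun a => g a.1) s -> pr (E `&` cylinder s) = c * pr (cylinder s)) ->
  forall t b s, uniq (unzip1 s) -> (forall a, a \in s -> measurable a.2) ->
    all (fun a => g a.1 && ((a.1.2 == k) ==> (t < a.1.1)%N)) s ->
  pr (Xevent t k b `&` (E `&` cylinder s)) = law phi gam x0 z k t b * c * pr (cylinder s).
Proof.
move=> gk mE Ec; elim=> [|t IH] b s us ms gs.
  rewrite Xevent0 /=; case: eqP => _; last by rewrite set0I /pr measure0 !mul0r.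
  by rewrite setTI Ec ?mul1r //; apply/allP => a /(allP gs) /andP[].
have fresh : (t.+1, k) \notin unzip1 s.
  by apply/mapP => -[a sa ea]; have := allP gs a sa; rewrite -ea /= eqxx ltnn andbF.
have factor b' : pr (Xevent t k b' `&`
      (U t.+1 k @^-1` step_set (z t.+1 k) b' b `&` (E `&` cylinder s))) =
    law phi gam x0 z k t b' * c * trans phi gam (z t.+1 k) b' b * pr (cylinder s).
  set a := ((t.+1, k), step_set (z t.+1 k) b' b).
  have ms' a' : a' \in a :: s -> measurable a'.2.
    by rewrite inE => /predU1P[-> | /ms //]; exact: measurable_step_set.
  have us' : uniq (unzip1 (a :: s)) by rewrite /= fresh.
  rewrite [_ `&` (E `&` _)]setICA.
  have -> : U t.+1 k @^-1` a.2 `&` cylinder s = cylinder (a :: s).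
    by rewrite /cylinder big_cons.
  rewrite IH // ?pr_cylinder //; last first.
    rewrite /= gk eqxx ltnSn; apply/allP => a' /(allP gs) /andP[-> /=].
    by case: (_ == k) => //= /ltnW.
  by rewrite big_cons pr_U_step_set; ring.
rewrite pr_XeventS_setI ?factor /=; first by ring.
exact/measurableI/measurable_cylinder.
Qed.

Lemma pr_Xevents_setI_cylinder t (x : 'I_N -> bool) (ks : seq 'I_N) : uniq ks ->
  forall s, uniq (unzip1 s) -> (forall a, a \in s -> measurable a.2) ->
    all (fun a => (a.1.2 \in ks) ==> (t < a.1.1)%N) s ->
  pr (\big[setI/setT]_(k <- ks) Xevent t k (x k) `&` cylinder s) =
  (\prod_(k <- ks) law phi gam x0 z k t (x k)) * pr (cylinder s).
Proof.
elim: ks => [|k ks IH] /=; first by move=> _ s *; rewrite !big_nil setTI mul1r.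
case/andP=> kks uks s us ms ls; rewrite !big_cons -setIA.
rewrite (pr_Xevent_setI_cylinder (g := fun i => (i.2 \in ks) ==> (t < i.1)%N)
  (c := \prod_(k <- ks) law phi gam x0 z k t (x k))) //.
- by move=> j; rewrite /= (negbTE kks).
- by apply: bigsetI_measurable => *; exact: measurable_Xevent.
- by move=> s' us' ms' ls'; exact: IH.
- apply/allP => a /(allP ls); rewrite inE.
  by case: (_ == k); case: (_ \in ks); case: (t < _)%N.
Qed.

Lemma pr_Xevents t (S : {set 'I_N}) (x : 'I_N -> bool) :
  P (\bigcap_(k in [set k | k \in S]) Xevent t k (x k)) =
  (\prod_(k in S) law phi gam x0 z k t (x k))%:E.
Proof.
rewrite (_ : \bigcap_(k in _) _ = \big[setI/setT]_(k <- enum S) Xevent t k (x k)).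
  rewrite prE; last by apply: bigsetI_measurable => *; exact: measurable_Xevent.
  have := @pr_Xevents_setI_cylinder t x _ (enum_uniq S) [::] isT _ isT.
  rewrite /cylinder big_nil setIT /pr probability_setT mulr1 => -> //.
  by rewrite big_enum.
by rewrite -(bigcap_seq (enum S)); apply: eq_bigcapl; split=> k /=; rewrite mem_enum.
Qed.

End Coordinates.

Theorem proposition3 (R : realType) (d : measure_display) (T : measurableType d)
  (P : probability T R) (N : nat) (hN : (0 < N)%N) (phi gam : R)
  (hphi : 0 < phi < 1) (hgam : 0 < gam < 1) (hsum : 1 <= phi + gam)
  (U : nat -> 'I_N -> T -> R) (hU : iid_uniform01 P U)
  (x0 : 'I_N -> bool) (z : nat -> 'I_N -> bool) :
  forall (t : nat) (S : {set 'I_N}) (x : 'I_N -> bool),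
    P (\bigcap_(k in [set k | k \in S])
          [set w | Xproc phi gam x0 z U t w k = x k]) =
    (\prod_(k in S) (if x k then ptk phi gam x0 z t k
                     else 1 - ptk phi gam x0 z t k))%:E.
Proof.
move=> t S x; rewrite (pr_Xevents hphi hgam hsum x0 z hU); congr EFin.
by apply: eq_bigr => k _; rewrite law_ptk.
Qed.
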